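(* Let $k,a,b$ be positive real numbers and $\{S^{(a,b)}_{k,n}\}_{n\ge0}$ the $k$-FL sequence. For any integers $n\ge r\ge0$, $S^{(a,b)}_{k,n-r}S^{(a,b)}_{k,n+r}-(S^{(a,b)}_{k,n})^2=(-1)^{n-r+1}\{a^2-(k^2+4)b^2\}F_{k,r}^2$.
   Context: The $k$-FL sequence (for positive reals $k,a,b$) is $S^{(a,b)}_{k,0}=2b$, $S^{(a,b)}_{k,1}=bk+a$, $S^{(a,b)}_{k,n}=kS^{(a,b)}_{k,n-1}+S^{(a,b)}_{k,n-2}$. $F_{k,n}$ is the $k$-Fibonacci sequence: $F_{k,0}=0$, $F_{k,1}=1$, $F_{k,n}=kF_{k,n-1}+F_{k,n-2}$. *)

From Stdlib Require Import Reals.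
Open Scope R_scope.

Fixpoint kfib (k : R) (n : nat) : R :=
  match n with
  | O => 0
  | S m => match m with
           | O => 1
           | S p => k * kfib k m + kfib k p
           end
  end.

Fixpoint kFL (k a b : R) (n : nat) : R :=
  match n with
  | O => 2 * b
  | S m => match m with
           | O => b * k + a
           | S p => k * kFL k a b m + kFL k a b p
           end
  end.

(* Every sequence u with u (n+2) = k u (n+1) + u n is determined by two
   consecutive terms through the k-Fibonacci numbers:
   u (m + j) = F_j u (m+1) + F_(j-1) u m.  Expanding u (n-r), u (n+r) this way
   from m = n - r reduces the identity to the doubling formulas for F_k, leaving
   -F_r^2 times the quadratic form u (m+1)^2 - k u m u (m+1) - u m^2, which
   changes sign at each step and equals a^2 - (k^2+4) b^2 at m = 0 for the
   k-FL sequence. *)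

From Stdlib Require Import Reals Lia.
Open Scope R_scope.

Definition krecurrent (k : R) (u : nat -> R) : Prop :=
  forall n, u (S (S n)) = k * u (S n) + u n.

Lemma kfib_krecurrent (k : R) : krecurrent k (kfib k).
Proof. intro n; reflexivity. Qed.

Lemma kFL_krecurrent (k a b : R) : krecurrent k (kFL k a b).
Proof. intro n; reflexivity. Qed.

Definition kform (k : R) (u : nat -> R) (m : nat) : R :=
  u (S m) ^ 2 - k * u m * u (S m) - u m ^ 2.

Section KRecurrent.

Variables (k : R) (u : nat -> R).
Hypothesis Hu : krecurrent k u.

(* [kfib k (S j) - k * kfib k j] is F_(j-1), with F_(-1) = 1. *)
Lemma krecurrent_add (m j : nat) :
  u (m + j) = kfib k j * u (S m) + (kfib k (S j) - k * kfib k j) * u m.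
Proof.
  revert m; induction j as [|j IH]; intro m.
  - rewrite Nat.add_0_r; simpl; ring.
  - replace (m + S j)%nat with (S m + j)%nat by lia.
    rewrite IH, Hu, (kfib_krecurrent k j); ring.
Qed.

Lemma kform_S (m : nat) : kform k u (S m) = - kform k u m.
Proof. unfold kform; rewrite Hu; ring. Qed.

Lemma kform_pow (m : nat) : kform k u m = (-1) ^ m * kform k u 0.
Proof.
  induction m as [|m IH].
  - simpl; ring.
  - rewrite kform_S, IH; simpl; ring.
Qed.

End KRecurrent.

Lemma kfib_double (k : R) (r : nat) :
  kfib k (r + r) = kfib k r * (2 * kfib k (S r) - k * kfib k r).
Proof. rewrite (krecurrent_add _ _ (kfib_krecurrent k)); ring. Qed.

Lemma kfib_double_succ (k : R) (r : nat) :
  kfib k (S (r + r)) = kfib k (S r) ^ 2 + kfib k r ^ 2.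
Proof.
  replace (S (r + r)) with (r + S r)%nat by lia.
  rewrite (krecurrent_add _ _ (kfib_krecurrent k)), (kfib_krecurrent k r); ring.
Qed.

Lemma krecurrent_catalan (k : R) (u : nat -> R) (m r : nat) :
  krecurrent k u ->
  u m * u (m + (r + r))%nat - u (m + r)%nat ^ 2 = - kfib k r ^ 2 * kform k u m.
Proof.
  intro Hu; unfold kform.
  rewrite !(krecurrent_add k u Hu m), kfib_double, kfib_double_succ; ring.
Qed.

Lemma kFL_kform0 (k a b : R) : kform k (kFL k a b) 0 = a ^ 2 - (k ^ 2 + 4) * b ^ 2.
Proof. unfold kform; simpl; ring. Qed.

Theorem theorem4p18 (k a b : R) (hk : 0 < k) (ha : 0 < a) (hb : 0 < b)
  (n r : nat) (hrn : (r <= n)%nat) :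
  kFL k a b (n - r) * kFL k a b (n + r) - (kFL k a b n) ^ 2
  = (-1) ^ (n - r + 1) * (a ^ 2 - (k ^ 2 + 4) * b ^ 2) * (kfib k r) ^ 2.
Proof.
  destruct (Nat.le_exists_sub r n hrn) as [m [-> _]].
  replace (m + r - r)%nat with m by lia.
  replace (m + r + r)%nat with (m + (r + r))%nat by lia.
  rewrite (krecurrent_catalan k _ m r (kFL_krecurrent k a b)).
  rewrite (kform_pow k _ (kFL_krecurrent k a b)), kFL_kform0, pow_add.
  ring.
Qed.
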